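(* Let $L$ be any linear order. Then $L/\!\sim_\omega \;\cong 1$ (i.e. $L$ has exactly one $\sim_\omega$-class, or more precisely all elements of $L$ are $\sim_\omega$-equivalent) if and only if $L$ is isomorphic to a suborder of $U$.
   Context: For a linear order $L$ and $x,y\in L$, write $[\{x,y\}]$ for the closed interval between $x$ and $y$ (i.e. $[x,y]$ if $x\le y$, $[y,x]$ otherwise). The countable condensation $\sim_\omega$ on $L$ is defined by $x\sim_\omega y$ iff $|[\{x,y\}]|\le\aleph_0$; it is an equivalence relation whose classes are intervals, and $L/\!\sim_\omega$ is the linear order of classes (class $A<$ class $B$ iff every element of $A$ is below every element of $B$). $U$ (the ''$\omega_1$-lengthened rational line'') is the linear order with point set $\{u_\alpha:\alpha<\omega_1\}\cup\{-u_\alpha:\alpha<\omega_1\}\cup\bigcup_{\alpha<\omega_1}\mathbb{Q}(\alpha)\cup\bigcup_{\alpha<\omega_1}\mathbb{Q}(-\alpha)\cup\mathbb{Q}(\mathrm{mid})$, where each $\mathbb{Q}(\cdot)$ is a copy of the rationals, ordered as follows: the right part $R=\{u_\alpha\}\cup\bigcup\mathbb{Q}(\alpha)$ is ordered by $u_\alpha<\mathbb{Q}(\alpha)<u_{\alpha+1}$ and $\{u_\alpha\}\cup\mathbb{Q}(\alpha)<\{u_\beta\}\cup\mathbb{Q}(\beta)$ for $\alpha<\beta$ (so $R$ is $\omega_1$ with each point replaced by a point followed by a copy of $\mathbb{Q}$); the left part $\{-u_\alpha\}\cup\bigcup\mathbb{Q}(-\alpha)$ is ordered as the reverse of $R$ (so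 $-u_{\alpha+1}<\mathbb{Q}(-\alpha)<-u_\alpha$ and the blocks for larger $\alpha$ lie further left); and $U=(\text{left part})+\mathbb{Q}(\mathrm{mid})+R$, i.e. $-u_0<\mathbb{Q}(\mathrm{mid})<u_0$. *)

From mathcomp Require Import all_boot all_order all_algebra.
Import Order.TTheory GRing.Theory Num.Theory.
Local Open Scope ring_scope.
Set Implicit Arguments.
Unset Strict Implicit.
Unset Printing Implicit Defensive.

Record strict_linear_order (T : Type) (lt : T -> T -> Prop) : Prop := {
  slo_irrefl : forall x, ~ lt x x;
  slo_trans  : forall x y z, lt x y -> lt y z -> lt x z;
  slo_total  : forall x y, lt x y \/ x = y \/ lt y x
}.

Definition countable_set (T : Type) (P : T -> Prop) : Prop :=
  exists f : T -> nat, forall x y, P x -> P y -> f x = f y -> x = y.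

Definition closed_between (T : Type) (lt : T -> T -> Prop) (x y z : T) : Prop :=
  let le a b := lt a b \/ a = b in
  (le x z /\ le z y) \/ (le y z /\ le z x).

Definition omega_equiv (T : Type) (lt : T -> T -> Prop) (x y : T) : Prop :=
  countable_set (closed_between lt x y).

Record is_omega1 (W : Type) (ltW : W -> W -> Prop) : Prop := {
  o1_linear : strict_linear_order ltW;
  o1_wf : well_founded ltW;
  o1_uncountable : ~ countable_set (fun _ : W => True);
  o1_segments : forall a : W, countable_set (fun b => ltW b a)
}.

(** Points of U built over omega_1 = W.
    [Upos a None] = u_a,   [Upos a (Some q)] = q in Q(a),
    [Uneg a None] = -u_a,  [Uneg a (Some q)] = q in Q(-a),
    [Umid q] = q in Q(mid). *)
Inductive Upt (W : Type) : Type :=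
  | Uneg : W -> option rat -> Upt W
  | Umid : rat -> Upt W
  | Upos : W -> option rat -> Upt W.
Arguments Uneg {W}. Arguments Umid {W}. Arguments Upos {W}.

Definition block_lt (x y : option rat) : Prop :=
  match x, y with
  | None, Some _ => True
  | Some p, Some q => (p < q)%R
  | _, _ => False
  end.

(** The right part R: omega_1 with each point replaced by a point followed
    by a copy of Q (lexicographic order). *)
Definition R_lt (W : Type) (ltW : W -> W -> Prop)
    (a : W) (x : option rat) (b : W) (y : option rat) : Prop :=
  ltW a b \/ (a = b /\ block_lt x y).

(** The order of U = (reverse of R) + Q(mid) + R. *)
Definition U_lt (W : Type) (ltW : W -> W -> Prop) (s t : Upt W) : Prop :=
  match s, t with
  | Uneg a x, Uneg b y => R_lt ltW b y a x
  | Uneg _ _, _ => True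
  | Umid _, Uneg _ _ => False
  | Umid p, Umid q => (p < q)%R
  | Umid _, Upos _ _ => True
  | Upos a x, Upos b y => R_lt ltW a x b y
  | Upos _ _, _ => False
  end.

Definition embeds_into (T : Type) (ltT : T -> T -> Prop)
    (S : Type) (ltS : S -> S -> Prop) : Prop :=
  exists f : T -> S, forall x y, ltT x y <-> ltS (f x) (f y).

From Stdlib Require Import ClassicalEpsilon FunctionalExtensionality.
From mathcomp Require Import all_boot all_order all_algebra.
From mathcomp Require Import lra.
Import Order.TTheory GRing.Theory Num.Theory.

(* Intervals of U are countable, and countability of intervals transfers
   along embeddings.  Conversely, fix x0 in L.  Above x0 every segment
   (x0, z] is countable; choose by transfinite recursion an increasing
   omega_1-sequence there, continued as long as possible.  Every point lies
   below some member of the sequence (otherwise omega_1 would inject into a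
   countable interval), so sending x to the least such index is monotone with
   countable fibres, and each fibre embeds into Q greedily.  This embeds the
   part above x0 into the right part of U; the same argument for the reversed
   order embeds the rest into the left part. *)

Set Implicit Arguments.
Unset Strict Implicit.
Unset Printing Implicit Defensive.
Local Open Scope ring_scope.

Section StrictOrders.
Variables (T V : Type) (ltT : T -> T -> Prop) (ltV : V -> V -> Prop).
Hypothesis HT : strict_linear_order ltT.

Lemma slo_asym x y : ltT x y -> ltT y x -> False.
Proof. by move=> lt_xy /(slo_trans HT lt_xy) /(slo_irrefl HT). Qed.

Lemma slo_nlt x y : ~ ltT x y -> ltT y x \/ y = x.
Proof. by case: (slo_total HT x y) => [|[->|]]; auto. Qed.

Lemma strict_mono_inj (f : T -> V) : (forall s, ~ ltV s s) ->
  (forall x y, ltT x y -> ltV (f x) (f y)) ->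
  forall x y, f x = f y -> x = y.
Proof.
move=> irrV mono x y fxy.
by case: (slo_total HT x y) => [/mono|[//|/mono]]; rewrite fxy => /irrV.
Qed.

Lemma strict_mono_embedding (f : T -> V) : (forall s, ~ ltV s s) ->
  (forall s t u, ltV s t -> ltV t u -> ltV s u) ->
  (forall x y, ltT x y -> ltV (f x) (f y)) -> embeds_into ltT ltV.
Proof.
move=> irrV transV mono; exists f => x y; split; first exact: mono.
case: (slo_total HT x y) => [//|[->/irrV//|/mono lt_fyx lt_fxy]].
by case: (irrV _ (transV _ _ _ lt_fyx lt_fxy)).
Qed.

Lemma embedding_closed_between (f : T -> V) :
  (forall x y, ltT x y <-> ltV (f x) (f y)) ->
  forall x y z, closed_between ltT x y z -> closed_between ltV (f x) (f y) (f z).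
Proof.
move=> Hf x y z.
have le_f a b : ltT a b \/ a = b -> ltV (f a) (f b) \/ f a = f b.
  by case=> [/Hf|->]; auto.
by case=> [[/le_f ? /le_f ?]|[/le_f ? /le_f ?]]; [left|right].
Qed.

End StrictOrders.

Lemma slo_flip T (lt : T -> T -> Prop) : strict_linear_order lt ->
  strict_linear_order (fun a b => lt b a).
Proof.
move=> H; split.
- exact: slo_irrefl H.
- by move=> x y z lt_yx lt_zy; apply: slo_trans H _ _ _ lt_zy lt_yx.
- by move=> x y; case: (slo_total H y x) => [|[->|]]; auto.
Qed.

Lemma wf_exists_minimal W (ltW : W -> W -> Prop) (P : W -> Prop) :
  well_founded ltW -> (exists a, P a) -> exists a, P a /\ forall b, ltW b a -> ~ P b.
Proof.
move=> wf [a Pa]; apply: NNPP => no_min.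
suff : forall c, ~ P c by move/(_ a).
apply: (well_founded_ind wf) => c IH Pc; apply: no_min; exists c; split => //.
Qed.

Lemma countable_set_sub T (A B : T -> Prop) :
  (forall x, A x -> B x) -> countable_set B -> countable_set A.
Proof. by move=> AB [f Hf]; exists f => x y /AB Bx /AB By; apply: Hf. Qed.

Lemma countable_set_inj T U (A : T -> Prop) (B : U -> Prop) (f : T -> U) :
  (forall x, A x -> B (f x)) -> (forall x y, A x -> A y -> f x = f y -> x = y) ->
  countable_set B -> countable_set A.
Proof.
move=> AB f_inj [g Hg]; exists (fun x => g (f x)) => x y Ax Ay /Hg gxy.
exact/f_inj/gxy/AB/Ay/AB.
Qed.

Lemma countable_set_union T (A B : T -> Prop) : countable_set A -> countable_set B ->
  countable_set (fun x => A x \/ B x).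
Proof.
move=> [fA HA] [fB HB].
exists (fun x => if excluded_middle_informative (A x)
                 then pickle (inl (fA x) : nat + nat)
                 else pickle (inr (fB x) : nat + nat)) => x y Hx Hy.
case: excluded_middle_informative => Ax; case: excluded_middle_informative => Ay;
  move/(pcan_inj pickleK) => // [fxy].
- exact: HA fxy.
- by apply: HB fxy; [case: Hx | case: Hy].
Qed.

Section CountableIntoOrderedField.
Variable R : realFieldType.

Lemma exists_max_index (P : nat -> Prop) (v : nat -> R) n :
  (exists2 i, (i < n)%N & P i) ->
  exists k, [/\ (k < n)%N, P k & forall i, (i < n)%N -> P i -> v i <= v k].
Proof.
elim: n => [[]//|n IH] [i lt_in Pi].
case: (classic (exists2 j, (j < n)%N & P j)) => [/IH [k [lt_kn Pk max_k]]|none_below].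
- have [[Pn le_kn]|not_n] := classic (P n /\ v k <= v n).
    exists n; split=> // j; rewrite ltnS leq_eqVlt => /predU1P [->//|lt_jn Pj].
    exact: le_trans (max_k j lt_jn Pj) le_kn.
  exists k; split=> [|//|j]; first exact: ltnW.
  rewrite ltnS leq_eqVlt => /predU1P [->|]; last exact: max_k.
  by move=> Pn; rewrite leNgt; apply/negP => /ltW ?; apply: not_n.
- have n_only j : (j < n.+1)%N -> P j -> j = n.
    rewrite ltnS leq_eqVlt => /predU1P [//|lt_jn Pj].
    by case: none_below; exists j.
  by exists n; split=> [//||j /n_only Ej /Ej ->//]; rewrite -(n_only i).
Qed.

Lemma exists_min_index (P : nat -> Prop) (v : nat -> R) n :
  (exists2 i, (i < n)%N & P i) ->
  exists k, [/\ (k < n)%N, P k & forall i, (i < n)%N -> P i -> v k <= v i].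
Proof.
move=> /(exists_max_index (fun i => - v i)) [k [lt_kn Pk max_k]].
by exists k; split=> // i lt_in Pi; rewrite -lerN2 max_k.
Qed.

Lemma exists_strictly_between n (A B : nat -> Prop) (v : nat -> R) :
  (forall i j, (i < n)%N -> (j < n)%N -> A i -> B j -> v i < v j) ->
  exists q, (forall i, (i < n)%N -> A i -> v i < q) /\
            (forall j, (j < n)%N -> B j -> q < v j).
Proof.
move=> AB.
have [/(exists_max_index v) [k [lt_kn Ak max_k]]|noA] := classic (exists2 i, (i < n)%N & A i);
have [/(exists_min_index v) [l [lt_ln Bl min_l]]|noB] := classic (exists2 j, (j < n)%N & B j).
- have := AB k l lt_kn lt_ln Ak Bl.
  exists ((v k + v l) / 2); split=> [i lt_in /(max_k i lt_in)|j lt_jn /(min_l j lt_jn)]; lra.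
- exists (v k + 1); split=> [i lt_in /(max_k i lt_in)|j lt_jn Bj]; first lra.
  by case: noB; exists j.
- exists (v l - 1); split=> [i lt_in Ai|j lt_jn /(min_l j lt_jn)]; last lra.
  by case: noA; exists i.
- by exists 0; split=> [i lt_in Ai|j lt_jn Bj]; [case: noA; exists i | case: noB; exists j].
Qed.

Section Greedy.
Variable r : nat -> nat -> Prop.
Hypothesis r_trans : forall i j k, r i j -> r j k -> r i k.
Hypothesis r_irrefl : forall i, ~ r i i.

Definition fits_between n (v : nat -> R) (q : R) : Prop :=
  (forall i, (i < n)%N -> r i n -> v i < q) /\
  (forall j, (j < n)%N -> r n j -> q < v j).

Fixpoint greedy_values m : nat -> R :=
  if m is m'.+1 then fun i =>
    if i == m' then epsilon (inhabits 0) (fits_between m' (greedy_values m'))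
    else greedy_values m' i
  else fun _ => 0.

Definition greedy i := greedy_values i.+1 i.

Lemma greedy_valuesE m i : (i < m)%N -> greedy_values m i = greedy i.
Proof.
elim: m => [//|m IH] /=; rewrite ltnS leq_eqVlt => /predU1P [->|lt_im].
  by rewrite /greedy /= eqxx.
by rewrite (ltn_eqF lt_im) IH.
Qed.

Lemma greedy_values_mono m i j : (i < m)%N -> (j < m)%N -> r i j ->
  greedy_values m i < greedy_values m j.
Proof.
elim: m i j => [i j|m IH i j]; first by rewrite ltn0; discriminate.
move=> lt_i lt_j rij /=.
rewrite ltnS leq_eqVlt in lt_i; rewrite ltnS leq_eqVlt in lt_j.
have fits : fits_between m (greedy_values m)
    (epsilon (inhabits 0) (fits_between m (greedy_values m))).
  apply: epsilon_spec; apply: exists_strictly_between => i' j' lt_i' lt_j' ri' rj'.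
  exact: IH (r_trans ri' rj').
move: lt_i lt_j rij => /predU1P [->|lt_im] /predU1P [->|lt_jm] rij.
- by case: (r_irrefl rij).
- by rewrite eqxx (ltn_eqF lt_jm); apply: fits.2.
- by rewrite eqxx (ltn_eqF lt_im); apply: fits.1.
- by rewrite (ltn_eqF lt_im) (ltn_eqF lt_jm); apply: IH.
Qed.

Lemma greedy_mono i j : r i j -> greedy i < greedy j.
Proof.
move=> rij; have lt_i : (i < (i + j).+1)%N by rewrite ltnS leq_addr.
have lt_j : (j < (i + j).+1)%N by rewrite ltnS leq_addl.
by rewrite -(greedy_valuesE lt_i) -(greedy_valuesE lt_j) greedy_values_mono.
Qed.

End Greedy.

Lemma countable_order_embeds_realField T (lt : T -> T -> Prop) (A : T -> Prop) :
  (forall x y z, lt x y -> lt y z -> lt x z) -> (forall x, ~ lt x x) ->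
  countable_set A ->
  exists e : T -> R, forall x y, A x -> A y -> lt x y -> e x < e y.
Proof.
move=> lt_tr lt_irr [f f_inj].
pose r i j := exists x y, [/\ A x, A y, f x = i, f y = j & lt x y].
have r_trans i j k : r i j -> r j k -> r i k.
  move=> [x [y [Ax Ay <- <- lt_xy]]] [y' [z [Ay' Az fy' <- lt_yz]]].
  rewrite (f_inj _ _ Ay' Ay fy') in lt_yz.
  by exists x, z; split=> //; apply: lt_tr lt_yz.
have r_irrefl i : ~ r i i.
  move=> [x [y [Ax Ay fx fy lt_xy]]].
  have exy : x = y by apply: f_inj; rewrite ?fx ?fy.
  by apply: (lt_irr y); rewrite -{1}exy.
exists (fun x => greedy r (f x)) => x y Ax Ay lt_xy.
by apply: greedy_mono => //; exists x, y.
Qed.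

End CountableIntoOrderedField.

Lemma omega1_inhabited W (ltW : W -> W -> Prop) : is_omega1 ltW -> inhabited W.
Proof.
move=> HW; apply: NNPP => empty; apply: (o1_uncountable HW).
by exists (fun _ => 0%N) => a; case: empty.
Qed.

Section OmegaOneEmbedding.
Variables (W : Type) (ltW : W -> W -> Prop) (HW : is_omega1 ltW).
Variables (T : Type) (lt : T -> T -> Prop) (HT : strict_linear_order lt).
Hypothesis T_inh : inhabited T.
Variable M : T -> Prop.
Hypothesis M_down_countable :
  forall z, M z -> countable_set (fun y => M y /\ ~ lt z y).

Definition chain_step (a : W) (prev : forall b, ltW b a -> T) : T :=
  epsilon T_inh (fun y => M y /\ forall b (lt_ba : ltW b a), lt (prev b lt_ba) y).

(* An increasing chain in [M] indexed by omega_1, as long as it can be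
   continued; past that point its values are junk. *)
Definition chain : W -> T := Fix (o1_wf HW) (fun _ => T) chain_step.

Lemma chainE a : chain a = @chain_step a (fun b _ => chain b).
Proof.
apply: Fix_eq => a' f g fg; congr chain_step.
by do 2 apply: functional_extensionality_dep => ?.
Qed.

Definition extendable a := exists2 y, M y & forall b, ltW b a -> lt (chain b) y.

Lemma chain_spec a : extendable a ->
  M (chain a) /\ forall b, ltW b a -> lt (chain b) (chain a).
Proof.
move=> [y My above_y]; rewrite chainE /chain_step.
have [|M_eps above_eps] := epsilon_spec T_inh
  (fun y => M y /\ forall b (lt_ba : ltW b a), lt (chain b) y).
  by exists y; split=> // b; apply: above_y.
by split=> // b; apply: above_eps.
Qed.

Definition bounds x a := extendable a /\ ~ lt (chain a) x.

(* If the chain stayed below [x] forever, it would inject omega_1 into the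
   countable set of elements of [M] below [x]. *)
Lemma exists_bound x : M x -> exists a, bounds x a.
Proof.
move=> Mx; apply: NNPP => unbounded.
have below a : extendable a /\ lt (chain a) x.
  elim/(well_founded_ind (o1_wf HW)): a => a IH.
  have ext_a : extendable a by exists x => // b /IH [].
  split=> //; apply: NNPP => not_below; apply: unbounded; by exists a.
have chain_inj := strict_mono_inj (o1_linear HW) (slo_irrefl HT)
  (fun a b lt_ab => (chain_spec (below b).1).2 a lt_ab).
apply: (o1_uncountable HW).
apply: (countable_set_inj (f := chain) _ _ (M_down_countable Mx)).
- move=> a _; split; first exact: (chain_spec (below a).1).1.
  by move/(slo_asym HT (below a).2).
- by move=> a b _ _; apply: chain_inj.
Qed.

Definition level x : W :=
  epsilon (omega1_inhabited HW)
    (fun a => bounds x a /\ forall b, ltW b a -> ~ bounds x b).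

Lemma level_spec x : M x ->
  bounds x (level x) /\ forall b, ltW b (level x) -> ~ bounds x b.
Proof.
move=> Mx.
exact: epsilon_spec _ _ (wf_exists_minimal (o1_wf HW) (exists_bound Mx)).
Qed.

Lemma level_mono x y : M x -> M y -> lt x y -> ~ ltW (level y) (level x).
Proof.
move=> Mx My lt_xy /(level_spec Mx).2; apply.
have [[ext_y not_lt_y] _] := level_spec My.
by split=> // /(slo_trans HT)/(_ lt_xy).
Qed.

Lemma level_fiber_countable a : countable_set (fun x => M x /\ level x = a).
Proof.
have [ext_a|not_ext] := classic (extendable a).
  apply: countable_set_sub (M_down_countable (chain_spec ext_a).1) => x [Mx <-].
  by split=> //; case: (level_spec Mx) => -[].
exists (fun _ => 0%N) => x y [Mx lx] _ _; case: not_ext.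
by rewrite -lx; case: (level_spec Mx) => -[].
Qed.

Lemma omega1_lex_embedding : exists G : T -> W * rat, forall x y, M x -> M y ->
  lt x y -> R_lt ltW (G x).1 (Some (G x).2) (G y).1 (Some (G y).2).
Proof.
pose fiber a x := M x /\ level x = a.
pose mono_on a (e : T -> rat) := forall x y, fiber a x -> fiber a y -> lt x y -> e x < e y.
have fiber_embedding a : mono_on a (epsilon (inhabits (fun=> 0)) (mono_on a)).
  apply: epsilon_spec; apply: countable_order_embeds_realField.
  - exact: slo_trans HT.
  - exact: slo_irrefl HT.
  - exact: level_fiber_countable.
exists (fun x => (level x, epsilon (inhabits (fun=> 0)) (mono_on (level x)) x)).
move=> x y Mx My lt_xy /=.
case: (slo_total (o1_linear HW) (level x) (level y)) => [|[lxy|/(level_mono Mx My lt_xy)//]].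
  by left.
by right; split=> //=; rewrite lxy; apply: fiber_embedding.
Qed.

End OmegaOneEmbedding.

Section OrderU.
Variables (W : Type) (ltW : W -> W -> Prop) (HW : is_omega1 ltW).

Lemma block_lt_irrefl x : ~ block_lt x x.
Proof. by case: x => [p|] //=; rewrite ltxx. Qed.

Lemma block_lt_trans x y z : block_lt x y -> block_lt y z -> block_lt x z.
Proof. by case: x y z => [p|] [q|] [s|] //=; apply: lt_trans. Qed.

Lemma R_lt_irrefl a x : ~ R_lt ltW a x a x.
Proof.
by case=> [/(slo_irrefl (o1_linear HW))|[_ /block_lt_irrefl]].
Qed.

Lemma R_lt_trans a x b y c z :
  R_lt ltW a x b y -> R_lt ltW b y c z -> R_lt ltW a x c z.
Proof.
have trW := slo_trans (o1_linear HW).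
case=> [lt_ab|[-> xy]] [lt_bc|[<- yz]]; [left; exact: trW lt_bc|by left|by left|].
by right; split=> //; apply: block_lt_trans yz.
Qed.

Lemma U_lt_irrefl s : ~ U_lt ltW s s.
Proof. by case: s => [a x|q|a x] /=; rewrite ?ltxx //; apply: R_lt_irrefl. Qed.

Lemma U_lt_trans s t u : U_lt ltW s t -> U_lt ltW t u -> U_lt ltW s u.
Proof.
case: s t u => [a x|p|a x] [b y|q|b y] [c z|r|c z] //=;
  by [move=> /[swap]; apply: R_lt_trans | apply: lt_trans | apply: R_lt_trans].
Qed.

Lemma omega1_le_countable a : countable_set (fun c => c = a \/ ltW c a).
Proof.
apply: countable_set_union (o1_segments HW a).
by exists (fun _ => 0%N) => c c' -> ->.
Qed.

Definition le_code a : W -> nat := epsilon (inhabits (fun=> 0%N))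
  (fun f => forall c c', c = a \/ ltW c a -> c' = a \/ ltW c' a -> f c = f c' -> c = c').

Lemma le_code_inj a c c' : c = a \/ ltW c a -> c' = a \/ ltW c' a ->
  le_code a c = le_code a c' -> c = c'.
Proof. by move: c c'; apply: epsilon_spec _ _ (omega1_le_countable a). Qed.

Lemma U_le_Uneg s c p : U_lt ltW s (Uneg c p) \/ s = Uneg c p ->
  exists a x, s = Uneg a x /\ (c = a \/ ltW c a).
Proof.
case: s => [a x|q|a x] /= [lt_s|eq_s] //.
- by exists a, x; split=> //; case: lt_s => [|[]]; auto.
- by case: eq_s => -> ->; exists c, p; split; [|left].
Qed.

Lemma Upos_U_le t c p : U_lt ltW (Upos c p) t \/ Upos c p = t ->
  exists b y, t = Upos b y /\ (c = b \/ ltW c b).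
Proof.
case: t => [b y|q|b y] /= [lt_t|eq_t] //.
- by exists b, y; split=> //; case: lt_t => [|[]]; auto.
- by case: eq_t => <- <-; exists c, p; split; [|left].
Qed.

(* Between [s] and [t], a point [Uneg c p] has [c] below the block of [s], and
   a point [Upos c p] has [c] below the block of [t]. *)
Definition U_code (s t z : Upt W) : nat :=
  match z with
  | Uneg c p => pickle (0%N, (if s is Uneg a _ then le_code a c else 0%N), p)
  | Umid q => pickle (1%N, 0%N, Some q)
  | Upos c p => pickle (2%N, (if t is Upos b _ then le_code b c else 0%N), p)
  end.

Lemma U_segment_countable s t : countable_set
  (fun z => (U_lt ltW s z \/ s = z) /\ (U_lt ltW z t \/ z = t)).
Proof.
exists (U_code s t) => z1 z2 [s_z1 z1_t] [s_z2 z2_t].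
case: z1 s_z1 z1_t => [c1 p1|q1|c1 p1] s_z1 z1_t;
case: z2 s_z2 z2_t => [c2 p2|q2|c2 p2] s_z2 z2_t; move/(pcan_inj pickleK) => //=.
- have [a [x [es c1a]]] := U_le_Uneg s_z1.
  have [a' [x' [es' c2a]]] := U_le_Uneg s_z2.
  move: c2a; rewrite es in es'; case: es' => <- _ c2a; rewrite es.
  by case=> /(le_code_inj c1a c2a) -> ->.
- by case=> ->.
- have [b [y [et c1b]]] := Upos_U_le z1_t.
  have [b' [y' [et' c2b]]] := Upos_U_le z2_t.
  move: c2b; rewrite et in et'; case: et' => <- _ c2b; rewrite et.
  by case=> /(le_code_inj c1b c2b) -> ->.
Qed.

Lemma U_interval_countable s t : countable_set (closed_between (U_lt ltW) s t).
Proof.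
exact: countable_set_sub (countable_set_union (U_segment_countable s t)
                                              (U_segment_countable t s)).
Qed.

End OrderU.

Lemma embeds_U_of_omega_equiv W (ltW : W -> W -> Prop) (HW : is_omega1 ltW)
    L (ltL : L -> L -> Prop) (HL : strict_linear_order ltL) :
  (forall x y, omega_equiv ltL x y) -> embeds_into ltL (U_lt ltW).
Proof.
move=> countable_intervals.
have [[x0]|L_empty] := classic (inhabited L); last first.
  by exists (fun _ => Umid 0) => x; case: L_empty.
have [Gneg mono_neg] : exists G : L -> W * rat, forall x y,
    ~ ltL x0 x -> ~ ltL x0 y -> ltL y x ->
    R_lt ltW (G x).1 (Some (G x).2) (G y).1 (Some (G y).2).
  apply: (omega1_lex_embedding HW (slo_flip HL) (inhabits x0)) => z _.
  apply: countable_set_sub (countable_intervals x0 z) => y [/(slo_nlt HL) ? /(slo_nlt HL) ?].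
  by right.
have [Gpos mono_pos] : exists G : L -> W * rat, forall x y,
    ltL x0 x -> ltL x0 y -> ltL x y ->
    R_lt ltW (G x).1 (Some (G x).2) (G y).1 (Some (G y).2).
  apply: (omega1_lex_embedding HW HL (inhabits x0)) => z _.
  apply: countable_set_sub (countable_intervals x0 z) => y [? /(slo_nlt HL) ?].
  by left; split=> //; left.
pose f x := if excluded_middle_informative (ltL x0 x)
  then Upos (Gpos x).1 (Some (Gpos x).2) else Uneg (Gneg x).1 (Some (Gneg x).2).
apply: (strict_mono_embedding HL (U_lt_irrefl HW) (@U_lt_trans _ _ HW) (f := f)).
move=> x y lt_xy; rewrite /f.
case: excluded_middle_informative => [x_pos|x_neg];
  case: excluded_middle_informative => [y_pos|y_neg] //=.
- exact: mono_pos.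
- by case: y_neg; move: lt_xy; apply: slo_trans.
- exact: mono_neg.
Qed.

Lemma omega_equiv_of_embeds_U W (ltW : W -> W -> Prop) (HW : is_omega1 ltW)
    L (ltL : L -> L -> Prop) (HL : strict_linear_order ltL) :
  embeds_into ltL (U_lt ltW) -> forall x y, omega_equiv ltL x y.
Proof.
move=> [f Hf] x y.
apply: (countable_set_inj (f := f)) (U_interval_countable HW (f x) (f y)).
- exact: embedding_closed_between.
- by move=> a b _ _; apply: (strict_mono_inj HL (U_lt_irrefl HW)) => ? ? /Hf.
Qed.

Theorem theorem3p17 (W : Type) (ltW : W -> W -> Prop) (HW : is_omega1 ltW)
    (L : Type) (ltL : L -> L -> Prop) (HL : strict_linear_order ltL) :
  (forall x y : L, omega_equiv ltL x y) <-> embeds_into ltL (U_lt ltW).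
Proof.
split; [exact: embeds_U_of_omega_equiv | exact: omega_equiv_of_embeds_U].
Qed.
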